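(* Let $G$ be a graph and $(x,y)\in E(G)$. Let $\Delta_G(x,y)=N_G(x)\cap N_G(y)$, $R_G(x)=(N_G(x)\setminus\{y\})\setminus\Delta_G(x,y)$ and $R_G(y)=(N_G(y)\setminus\{x\})\setminus\Delta_G(x,y)$. Suppose that for some $k\le\min\{|R_G(x)|,|R_G(y)|\}$ there exist distinct $a_1,\dots,a_k\in R_G(x)$ and distinct $b_1,\dots,b_k\in R_G(y)$ with $d_G(a_i,b_i)\le 2$ for all $i$ (a 2-matching of size $k$). Then $$\kappa(x,y)\ge -2+\frac{3|\Delta_G(x,y)|+k+2}{\max\{d_x,d_y\}}.$$ Moreover, if $k=\min\{|R_G(x)|,|R_G(y)|\}$, then $$\kappa(x,y)\ge -2+\frac{2|\Delta_G(x,y)|+\min\{d_x,d_y\}+1}{\max\{d_x,d_y\}}.$$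
   Context: Graphs are locally finite and unweighted. $d_G$ is the shortest-path metric, $N_G(v)$ the neighbour set and $d_v$ the degree of $v$; $m_v$ is the uniform probability measure on $N_G(v)$, and for an edge $(x,y)$, $\kappa(x,y)=1-W_1(m_x,m_y)$, where $W_1$ is the Wasserstein-1 (transportation) distance with respect to $d_G$. *)

From HB Require Import structures.
From mathcomp Require Import all_boot all_order all_algebra.
From mathcomp Require Import finmap.
From mathcomp Require Import boolp classical_sets reals.
Set Implicit Arguments. Unset Strict Implicit. Unset Printing Implicit Defensive.
Import Order.TTheory GRing.Theory Num.Theory.
Local Open Scope fset_scope.
Local Open Scope ring_scope.

(* A (possibly infinite) locally finite simple graph on a choiceType T is
   given by its neighbourhood map N : T -> {fset T}, assumed symmetric and
   loopless (hypotheses in the theorem). *)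

Section Graph.
Variables (T : choiceType) (N : T -> {fset T}).

Fixpoint walk (n : nat) (u v : T) : Prop :=
  match n with
  | 0 => u = v
  | n'.+1 => exists2 w, w \in N u & walk n' w v
  end.

(* shortest-path distance d_G(u,v) (junk value 0 if u, v are in different
   components; never used in that case below) *)
Definition gdist (u v : T) : nat :=
  match pselect (exists n, `[< walk n u v >]) with
  | left P => ex_minn P
  | right _ => 0%N
  end.

Definition deg (v : T) : nat := #|` N v|.

Variable R : realType.

Definition coupling (x y : T) (p : T -> T -> R) : Prop :=
  (forall u v, 0 <= p u v) /\
  (forall u, u \in N x -> \sum_(v <- N y) p u v = (deg x)%:R^-1) /\
  (forall v, v \in N y -> \sum_(u <- N x) p u v = (deg y)%:R^-1).

Definition transport_cost (x y : T) (p : T -> T -> R) : R :=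
  \sum_(u <- N x) \sum_(v <- N y) p u v * (gdist u v)%:R.

Definition W1 (x y : T) : R :=
  inf [set c | exists2 p, coupling x y p & c = transport_cost x y p].

Definition kappa (x y : T) : R := 1 - W1 x y.

Definition Delta (x y : T) : {fset T} := N x `&` N y.
Definition Rset (x y : T) : {fset T} := (N x `\ y) `\` Delta x y.

End Graph.

From HB Require Import structures.
From mathcomp Require Import all_boot all_order all_algebra.
From mathcomp Require Import finmap.
From mathcomp Require Import boolp classical_sets reals.
From mathcomp Require Import ring lra zify.
Set Implicit Arguments. Unset Strict Implicit. Unset Printing Implicit Defensive.
Import Order.TTheory GRing.Theory Num.Theory.
Local Open Scope fset_scope.
Local Open Scope ring_scope.

(* Put mass 1/max(d_x, d_y) on each pair (z, z) with z in Delta (saving 3 on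
   the trivial bound W_1 <= 3), on (y, x) (saving at least 2) and on each
   (a_i, b_i) (saving at least 1).  Such a sub-coupling completes to a coupling
   by spreading the remaining mass as a product measure; since every pair of
   neighbours of x and y is at distance at most 3, W_1 <= 3 - saving.  The
   second bound follows from d_x <= |R(x)| + |Delta| + 1. *)

Lemma sumr_pick (R : numDomainType) (T : eqType) (s : seq T) (w : T) (F : T -> R) :
  uniq s -> \sum_(v <- s) (v == w)%:R * F v = (w \in s)%:R * F w.
Proof.
elim: s => [|z s IH] /=; first by rewrite big_nil mul0r.
case/andP=> zs us; rewrite big_cons IH // in_cons.
case: (eqVneq z w) => [<-|ne] /=; last by rewrite mul0r add0r.
by rewrite (negbTE zs) mul0r addr0 mul1r.
Qed.

Lemma sumr_pick1 (R : numDomainType) (T : eqType) (s : seq T) (w : T) :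
  uniq s -> \sum_(v <- s) (v == w)%:R = (w \in s)%:R :> R.
Proof.
move=> us; have := @sumr_pick R T s w (fun _ => 1) us.
by rewrite mulr1; under eq_bigr do rewrite mulr1.
Qed.

Lemma sumr_pick2 (R : numDomainType) (T : eqType) (s1 s2 : seq T) (w1 w2 : T)
    (G : T -> T -> R) :
  uniq s1 -> uniq s2 -> w1 \in s1 -> w2 \in s2 ->
  \sum_(u <- s1) \sum_(v <- s2) (u == w1)%:R * (v == w2)%:R * G u v = G w1 w2.
Proof.
move=> u1 u2 h1 h2.
have inner u : \sum_(v <- s2) (u == w1)%:R * (v == w2)%:R * G u v
               = (u == w1)%:R * G u w2.
  under eq_bigr do rewrite -mulrA mulrCA.
  by rewrite sumr_pick // h2 mul1r.
by rewrite (eq_bigr _ (fun u _ => inner u)) sumr_pick // h1 mul1r.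
Qed.

Lemma ler_sum_seq_mem (R : numDomainType) (T : eqType) (s : seq T) (u : T)
    (F : T -> R) :
  (forall x, 0 <= F x) -> u \in s -> F u <= \sum_(v <- s) F v.
Proof.
move=> F0; elim: s => [|z s IH] //=; rewrite in_cons big_cons.
case/orP=> [/eqP->|us]; first by rewrite lerDl sumr_ge0.
by apply: le_trans (IH us) _; rewrite lerDr.
Qed.

Lemma indicator_sum_le1 (R : numDomainType) (T : eqType) k (f : 'I_k -> T)
    (u : T) (P1 P2 : bool) :
  injective f -> ~~ (P1 && P2) -> (forall i, f i = u -> ~~ P1 && ~~ P2) ->
  P1%:R + P2%:R + \sum_(i < k) (u == f i)%:R <= 1 :> R.
Proof.
move=> finj h12 hf.
case: (pselect (exists i, f i = u)) => [[i0 fi0]|nof].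
  have -> : \sum_(i < k) (u == f i)%:R = 1 :> R.
    rewrite -fi0 (bigD1 i0) //= eqxx big1 ?addr0 // => j /negbTE.
    by rewrite (inj_eq finj) eq_sym => ->.
  by case/andP: (hf i0 fi0) => /negbTE-> /negbTE->; rewrite !add0r.
rewrite big1 ?addr0; last by move=> i _; case: eqVneq => // ui; case: nof; exists i.
by move: h12 hf; case: P1; case: P2 => //= _ _; rewrite ?add0r ?addr0.
Qed.

(* The missing mass is distributed proportionally to rx u * ry v, which has
   exactly the required marginals. *)
Lemma subcoupling_completion (R : realType) (T : eqType) (s1 s2 : seq T)
    (al be L : R) (q d : T -> T -> R) :
  (size s1)%:R * al = 1 -> (size s2)%:R * be = 1 ->
  (forall u v, 0 <= q u v) ->
  (forall u, \sum_(v <- s2) q u v <= al) ->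
  (forall v, \sum_(u <- s1) q u v <= be) ->
  (forall u v, u \in s1 -> v \in s2 -> d u v <= L) ->
  exists p : T -> T -> R,
    [/\ forall u v, 0 <= p u v,
        forall u, u \in s1 -> \sum_(v <- s2) p u v = al,
        forall v, v \in s2 -> \sum_(u <- s1) p u v = be &
        \sum_(u <- s1) \sum_(v <- s2) p u v * d u v <=
          L - \sum_(u <- s1) \sum_(v <- s2) q u v * (L - d u v)].
Proof.
move=> h1 h2 q0 hrow hcol hd.
pose rx u := al - \sum_(v <- s2) q u v.
pose ry v := be - \sum_(u <- s1) q u v.
pose Q := \sum_(u <- s1) \sum_(v <- s2) q u v.
pose S := \sum_(u <- s1) rx u.
have rx0 u : 0 <= rx u by rewrite subr_ge0.
have ry0 v : 0 <= ry v by rewrite subr_ge0.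
have sum_const (s : seq T) (c : R) : \sum_(v <- s) c = (size s)%:R * c.
  by rewrite big_const_seq count_predT iter_addr_0 mulr_natl.
have SE : S = 1 - Q by rewrite /S big_split /= sumrN sum_const h1.
have SyE : \sum_(v <- s2) ry v = S.
  by rewrite SE big_split /= sumrN sum_const h2 /Q exchange_big.
have S0 : 0 <= S by apply: sumr_ge0.
pose r u v := rx u * ry v / S.
have r0 u v : 0 <= r u v by rewrite mulr_ge0 ?invr_ge0 // mulr_ge0.
exists (fun u v => q u v + r u v); split.
- by move=> u v; rewrite addr_ge0.
- move=> u us; rewrite big_split /= /r -mulr_suml -mulr_sumr SyE.
  case: (eqVneq S 0) => [Sz|Sn]; last by rewrite mulfK // /rx addrC subrK.
  have : rx u = 0.
    by apply/le_anti; rewrite rx0 andbT -Sz; apply: ler_sum_seq_mem.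
  by rewrite Sz invr0 !mulr0 addr0 /rx => /eqP; rewrite subr_eq0 => /eqP.
- move=> v vs; rewrite big_split /= /r -!mulr_suml -/S.
  case: (eqVneq S 0) => [Sz|Sn]; last first.
    by rewrite mulrAC mulfV // mul1r /ry addrC subrK.
  have : ry v = 0.
    by apply/le_anti; rewrite ry0 andbT -Sz -SyE; apply: ler_sum_seq_mem.
  by rewrite Sz invr0 !mulr0 addr0 /ry => /eqP; rewrite subr_eq0 => /eqP.
- have saving : \sum_(u <- s1) \sum_(v <- s2) q u v * (L - d u v) =
      L * Q - \sum_(u <- s1) \sum_(v <- s2) q u v * d u v.
    rewrite /Q mulr_sumr -sumrB; apply: eq_bigr => u _.
    by rewrite mulr_sumr -sumrB; apply: eq_bigr => v _; rewrite mulrBr mulrC.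
  have split_cost : \sum_(u <- s1) \sum_(v <- s2) (q u v + r u v) * d u v =
     \sum_(u <- s1) \sum_(v <- s2) q u v * d u v +
     \sum_(u <- s1) \sum_(v <- s2) r u v * d u v.
    rewrite -big_split; apply: eq_bigr => u _.
    by rewrite -big_split; apply: eq_bigr => v _; rewrite mulrDl.
  have rest_le : \sum_(u <- s1) \sum_(v <- s2) r u v * d u v <=
                 \sum_(u <- s1) \sum_(v <- s2) r u v * L.
    rewrite big_seq_cond [X in _ <= X]big_seq_cond.
    apply: ler_sum => u /andP[us _].
    rewrite big_seq_cond [X in _ <= X]big_seq_cond.
    by apply: ler_sum => v /andP[vs _]; apply: ler_wpM2l; last exact: hd.
  have rest_mass : \sum_(u <- s1) \sum_(v <- s2) r u v * L = L * S.
    rewrite (eq_bigr (fun u => rx u * (\sum_(v <- s2) ry v) * (L / S))); last first.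
      move=> u _; rewrite mulr_sumr mulr_suml; apply: eq_bigr => v _.
      by rewrite /r mulrA mulrAC -!mulrA.
    rewrite -mulr_suml SyE -mulr_suml -/S.
    by case: (eqVneq S 0) => [->|Sn]; [rewrite !(mulr0, mul0r) | field].
  rewrite split_cost saving; apply: le_trans (lerD (lexx _) rest_le) _.
  rewrite rest_mass SE; lra.
Qed.

Section Curvature.
Variables (R : realType) (T : choiceType) (N : T -> {fset T}).
Hypothesis Nsym : forall u v : T, (v \in N u) = (u \in N v).

Lemma gdist_le_walk n u v : walk N n u v -> (gdist N u v <= n)%N.
Proof.
move=> W; rewrite /gdist; case: pselect => [P|//].
by case: ex_minnP => m _; apply; apply/asboolP.
Qed.

Lemma gdist_refl u : gdist N u u = 0%N.
Proof. by apply/eqP; rewrite -leqn0; apply: (@gdist_le_walk 0). Qed.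

Lemma gdist_neighbours_le3 x y u v :
  y \in N x -> u \in N x -> v \in N y -> (gdist N u v <= 3)%N.
Proof.
move=> hxy hu hv; apply: gdist_le_walk.
by exists x; [rewrite Nsym | exists y => //; exists v].
Qed.

Lemma deg_gt0 x w : w \in N x -> (0 < deg N x)%N.
Proof. by move=> hw; rewrite /deg (cardfsD1 w) hw. Qed.

Lemma Rset_neighbour x y v : v \in Rset N x y -> v \in N x.
Proof. by rewrite in_fsetD in_fsetD1 => /and3P[]. Qed.

Lemma W1_le_cost x y (p : T -> T -> R) :
  coupling N x y p -> W1 N R x y <= transport_cost N x y p.
Proof.
move=> cp; apply: ge_inf; last by exists p.
exists 0 => _ [p' [p'0 _] ->].
by do 2 (apply: sumr_ge0 => ? _); rewrite mulr_ge0.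
Qed.

Lemma kappa_ge_subcoupling x y (q : T -> T -> R) :
  y \in N x -> (forall u v, 0 <= q u v) ->
  (forall u, \sum_(v <- N y) q u v <= (deg N x)%:R^-1) ->
  (forall v, \sum_(u <- N x) q u v <= (deg N y)%:R^-1) ->
  -2 + \sum_(u <- N x) \sum_(v <- N y) q u v * (3 - (gdist N u v)%:R)
    <= kappa N R x y.
Proof.
move=> hxy q0 hrow hcol.
have xy : x \in N y by rewrite -Nsym.
have mass1 z w : w \in N z -> (size (N z))%:R * (deg N z)%:R^-1 = 1 :> R.
  by move=> hw; rewrite mulfV // pnatr_eq0 -lt0n; exact: deg_gt0 hw.
have hd u v : u \in N x -> v \in N y -> (gdist N u v)%:R <= 3 :> R.
  by move=> hu hv; rewrite ler_nat; apply: gdist_neighbours_le3 hxy hu hv.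
have [p [p0 prow pcol pcost]] := subcoupling_completion
  (mass1 _ _ hxy) (mass1 _ _ xy) q0 hrow hcol hd.
have : W1 N R x y <= transport_cost N x y p by apply: W1_le_cost.
rewrite /kappa; move: pcost; rewrite /transport_cost; lra.
Qed.

Lemma Delta_sym x y : Delta N y x = Delta N x y.
Proof. exact: fsetIC. Qed.

Lemma deg_le_Rset_Delta x y :
  (deg N x <= #|` Rset N x y| + #|` Delta N x y| + 1)%N.
Proof.
rewrite /Rset cardfsD /deg (cardfsD1 y (N x)).
have := fsubset_leq_card (fsubsetIr (N x `\ y) (Delta N x y)).
case: (y \in N x); lia.
Qed.

(* The sub-coupling of the proof is this plan scaled by 1/max(d_x, d_y). *)
Definition partial_plan x y k (a b : 'I_k -> T) (u v : T) : R :=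
  (v == u)%:R * (u \in Delta N x y)%:R + (u == y)%:R * (v == x)%:R
  + \sum_(i < k) (u == a i)%:R * (v == b i)%:R.

Lemma partial_plan_ge0 x y k (a b : 'I_k -> T) u v :
  0 <= partial_plan x y a b u v.
Proof. by rewrite /partial_plan !addr_ge0 ?sumr_ge0 // => *; rewrite mulr_ge0. Qed.

Lemma partial_plan_sym x y k (a b : 'I_k -> T) u v :
  partial_plan y x b a v u = partial_plan x y a b u v.
Proof.
rewrite /partial_plan Delta_sym [(v == x)%:R * _]mulrC eq_sym.
under eq_bigr do rewrite mulrC.
by case: eqVneq => [->|_]; rewrite ?mul0r.
Qed.

Lemma partial_plan_row_le1 x y k (a b : 'I_k -> T) u :
  x \in N y -> y \notin N y -> (forall i, b i \in N y) -> injective a ->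
  (forall i, a i \in Rset N x y) ->
  \sum_(v <- N y) partial_plan x y a b u v <= 1.
Proof.
move=> xy yy hb ainj ha; have uy := fset_uniq (N y).
rewrite /partial_plan !big_split /= sumr_pick // -mulr_sumr sumr_pick1 // xy mulr1.
rewrite exchange_big /=.
under eq_bigr do rewrite -mulr_sumr sumr_pick1 // hb mulr1.
have noDy : ~~ ((u \in Delta N x y) && (u == y)).
  by apply/negP => /andP[+ /eqP uy']; rewrite uy' in_fsetI (negbTE yy) andbF.
have notRa i : a i = u -> ~~ (u \in Delta N x y) && ~~ (u == y).
  by move=> <-; move: (ha i); rewrite in_fsetD in_fsetD1 => /andP[-> /andP[->]].
refine (le_trans _ (indicator_sum_le1 R ainj noDy notRa)).
by rewrite !lerD2r ler_piMl // lern1 leq_b1.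
Qed.

Lemma partial_plan_col_le1 x y k (a b : 'I_k -> T) v :
  y \in N x -> x \notin N x -> (forall i, a i \in N x) -> injective b ->
  (forall i, b i \in Rset N y x) ->
  \sum_(u <- N x) partial_plan x y a b u v <= 1.
Proof.
move=> *; under eq_bigr do rewrite -partial_plan_sym.
exact: partial_plan_row_le1.
Qed.

Lemma partial_plan_saving x y k (a b : 'I_k -> T) :
  y \in N x -> (forall i, a i \in N x) -> (forall i, b i \in N y) ->
  (forall i, gdist N (a i) (b i) <= 2)%N ->
  (3 * #|` Delta N x y| + k + 2)%:R <=
  \sum_(u <- N x) \sum_(v <- N y) partial_plan x y a b u v * (3 - (gdist N u v)%:R).
Proof.
move=> hxy ha hb hab.
have xy : x \in N y by rewrite -Nsym.
have ux := fset_uniq (N x); have uy := fset_uniq (N y).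
pose g u v : R := 3 - (gdist N u v)%:R.
have -> : \sum_(u <- N x) \sum_(v <- N y) partial_plan x y a b u v * g u v =
   \sum_(u <- N x) \sum_(v <- N y) (v == u)%:R * (u \in Delta N x y)%:R * g u v +
   \sum_(u <- N x) \sum_(v <- N y) (u == y)%:R * (v == x)%:R * g u v +
   \sum_(u <- N x) \sum_(v <- N y)
     (\sum_(i < k) (u == a i)%:R * (v == b i)%:R) * g u v.
  rewrite -!big_split; apply: eq_bigr => u _.
  by rewrite -!big_split; apply: eq_bigr => v _; rewrite !mulrDl.
have diag :
    \sum_(u <- N x) \sum_(v <- N y) (v == u)%:R * (u \in Delta N x y)%:R * g u v
    = 3 * (#|` Delta N x y|)%:R.
  rewrite (eq_bigr (fun u => (u \in Delta N x y)%:R * 3)); last first.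
    move=> u _; under eq_bigr do rewrite -mulrA.
    rewrite sumr_pick // /g gdist_refl subr0 in_fsetI.
    by case: (u \in N y); rewrite ?andbF ?mul0r ?mul1r ?andbT.
  rewrite -mulr_suml mulrC -(big_fset_incl _ (fsubsetIl (N x) (N y))); last first.
    by move=> u _ /negbTE; rewrite /Delta => ->.
  rewrite big_seq (eq_bigr (fun _ => 1)) => [|u]; last by rewrite /Delta => ->.
  by rewrite -big_seq big_const_seq count_predT iter_addr_0.
have edge : 2 <= \sum_(u <- N x) \sum_(v <- N y) (u == y)%:R * (v == x)%:R * g u v.
  rewrite sumr_pick2 // /g.
  have : (gdist N y x <= 1)%N by apply: (@gdist_le_walk 1); exists x.
  by rewrite -(ler_nat R) => ?; lra.
have matching : k%:R <= \sum_(u <- N x) \sum_(v <- N y)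
                   (\sum_(i < k) (u == a i)%:R * (v == b i)%:R) * g u v.
  under eq_bigr do under eq_bigr do rewrite mulr_suml.
  under eq_bigr do rewrite exchange_big /=.
  rewrite exchange_big /= -[k in k%:R]card_ord -sumr_const.
  apply: ler_sum => i _; rewrite sumr_pick2 // /g.
  by have := hab i; rewrite -(ler_nat R) => ?; lra.
rewrite diag !natrD; lra.
Qed.

End Curvature.

Theorem lemma5p1 (R : realType) (T : choiceType) (N : T -> {fset T})
  (Nsym : forall u v : T, (v \in N u) = (u \in N v))
  (Nirr : forall u : T, u \notin N u)
  (x y : T) (hxy : y \in N x)
  (k : nat) (hk : (k <= minn #|` Rset N x y| #|` Rset N y x|)%N)
  (a b : 'I_k -> T) (ainj : injective a) (binj : injective b)
  (ha : forall i, a i \in Rset N x y) (hb : forall i, b i \in Rset N y x)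
  (hab : forall i, (gdist N (a i) (b i) <= 2)%N) :
  (kappa N R x y) >= -2 + (3 * #|` Delta N x y| + k + 2)%:R
                         / (maxn (deg N x) (deg N y))%:R
  /\ (k = minn #|` Rset N x y| #|` Rset N y x| ->
      (kappa N R x y) >= -2 + (2 * #|` Delta N x y| + minn (deg N x) (deg N y) + 1)%:R
                            / (maxn (deg N x) (deg N y))%:R).
Proof.
have xy : x \in N y by rewrite -Nsym.
set m := maxn (deg N x) (deg N y); set c : R := m%:R^-1.
have c0 : 0 <= c by rewrite invr_ge0.
have c_le z w : w \in N z -> (deg N z <= m)%N -> c <= (deg N z)%:R^-1.
  move=> hw hz; have dz := deg_gt0 hw.
  by rewrite lef_pV2 ?posrE ?ltr0n ?ler_nat // (leq_trans dz).
have part1 : -2 + (3 * #|` Delta N x y| + k + 2)%:R * c <= kappa N R x y.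
  refine (le_trans _ (kappa_ge_subcoupling Nsym (q := fun u v =>
           c * partial_plan R N x y a b u v) hxy _ _ _)).
  - rewrite lerD2l mulrC; under eq_bigr do under eq_bigr do rewrite -mulrA.
    under eq_bigr do rewrite -mulr_sumr; rewrite -mulr_sumr ler_wpM2l //.
    by apply: partial_plan_saving => // i;
      [apply: Rset_neighbour (ha i) | apply: Rset_neighbour (hb i)].
  - by move=> u v; rewrite mulr_ge0 ?partial_plan_ge0.
  - move=> u; rewrite -mulr_sumr; apply: le_trans (c_le _ _ hxy (leq_maxl _ _)).
    rewrite ler_piMr //; apply: partial_plan_row_le1 => // i.
    exact: Rset_neighbour (hb i).
  - move=> v; rewrite -mulr_sumr; apply: le_trans (c_le _ _ xy (leq_maxr _ _)).
    rewrite ler_piMr //; apply: partial_plan_col_le1 => // i.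
    exact: Rset_neighbour (ha i).
split => // kmin; apply: le_trans part1.
rewrite lerD2l ler_wpM2r ?invr_ge0 // ler_nat kmin.
have := deg_le_Rset_Delta N x y; have := deg_le_Rset_Delta N y x.
rewrite Delta_sym; lia.
Qed.
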